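(* Let $\mathcal{A}$ be a finite or countable alphabet, $\mathcal{M}$ a countable set of probability measures on $\mathcal{A}^\infty$, $w:\mathcal{M}\to(0,1]$ a prior with $\sum_\nu w_\nu=1$, $\xi$ the Bayes mixture, $\mu\in\mathcal{M}$, and $\delta\in(0,1]$. Define $\hat d_t$ and $\hat h_t$ (with this $\delta$) as in the context. Then $$\mu(\forall t: d_t\le\hat d_t)\ge 1-\delta\qquad\text{and}\qquad \mu(\forall t: h_t\le\hat h_t)\ge1-\delta.$$
   Context: $\mathcal{A}^\infty$ carries the $\sigma$-algebra generated by cylinders $\Gamma_x=\{x\omega\}$; for a measure $\rho$, $\rho(x):=\rho(\Gamma_x)$, $\rho(y|x):=\rho(xy)/\rho(x)$, and for $\omega\in\mathcal{A}^\infty$, $\rho_{<t}(\omega):=\rho(\omega_{<t})$ with $\omega_{<t}=\omega_1\cdots\omega_{t-1}$. Bayes mixture $\xi(A):=\sum_\nu w_\nu\nu(A)$; posterior $w_\nu(x):=w_\nu\nu(x)/\xi(x)$. Logs natural. For a finite string $x$ and measures $\rho,\xi$: squared Hellinger distance $h_x(\rho,\xi):=\sum_{a\in\mathcal{A}}(\sqrt{\rho(a|x)}-\sqrt{\xi(a|x)})^2$ and KL divergence $d_x(\rho,\xi):=\sum_a\rho(a|x)\ln\frac{\rho(a|x)}{\xi(a|x)}$; random variables $h_t(\rho,\xi)(\omega):=h_{\omega_{<t}}(\rho,\xi)$, $d_t(\rho,\xi)(\omega):=d_{\omega_{<t}}(\rho,\xi)$. Set $d_t:=d_t(\mu,\xi)$,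 $h_t:=h_t(\mu,\xi)$, $c_t(\omega):=\sum_{\nu}w_\nu(\omega_{<t})d_{\omega_{<t}}(\nu,\xi)$. Plausible classes: $\mathcal{M}_t:=\{\nu\in\mathcal{M}:\forall\tau\le t,\ \nu_{<\tau}/\xi_{<\tau}\ge\delta w_\mu/w_\nu\}$ (a random set). Define $\hat d_t:=\frac{c_t}{w_\mu\delta}$ and $\hat h_t:=\sup_{\nu\in\mathcal{M}_t}\left\{\frac{w_\nu}{w_\mu}h_t(\nu,\xi)\right\}$. *)

From HB Require Import structures.
From mathcomp Require Import all_boot all_order all_algebra.
From mathcomp Require Import all_classical all_reals all_analysis.
Set Implicit Arguments. Unset Strict Implicit. Unset Printing Implicit Defensive.
Import Order.TTheory GRing.Theory Num.Theory.
Local Open Scope classical_set_scope.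
Local Open Scope ring_scope.

Section Defs.
Variables (R : realType) (A : pointedType).

(* omega_{<t} for t = n+1 : the first n letters of omega *)
Definition prefix (om : nat -> A) (n : nat) : seq A := mkseq om n.

Definition cyl (x : seq A) : set (nat -> A) :=
  [set om | prefix om (size x) = x].

Definition cylinders : set (set (nat -> A)) := [set cyl x | x in setT].

Definition seqspace := g_sigma_algebraType cylinders.

Definition cylv (P : set seqspace -> \bar R) (x : seq A) : R := fine (P (cyl x)).

Definition sumE (T : choiceType) (f : T -> \bar R) : \bar R :=
  (esum setT (f^\+) - esum setT (f^\-))%E.

Definition mixture (I : choiceType) (w : I -> R)
  (nu : I -> probability seqspace R) (S : set seqspace) : \bar R :=
  esum setT (fun i => ((w i)%:E * nu i S)%E).

(* rho(a|x) = rho(xa)/rho(x)  (with the convention r/0 = 0) *)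
Definition cond (r : seq A -> R) (x : seq A) (a : A) : R := r (rcons x a) / r x.

Definition hell (r s : seq A -> R) (x : seq A) : \bar R :=
  esum setT (fun a => ((Num.sqrt (cond r x a) - Num.sqrt (cond s x a)) ^+ 2)%:E).

Definition klterm (p q : R) : \bar R :=
  if p == 0 then 0%E else if q == 0 then +oo%E else (p * ln (p / q))%:E.

Definition kl (r s : seq A -> R) (x : seq A) : \bar R :=
  sumE (fun a => klterm (cond r x a) (cond s x a)).

Section Model.
Variables (I : countType) (nu : I -> probability seqspace R) (w : I -> R)
  (m : I) (delta : R).

Definition xi : seq A -> R := cylv (mixture w nu).
Definition nuv (i : I) : seq A -> R := cylv (nu i).

Definition post (i : I) (x : seq A) : R := w i * nuv i x / xi x.

Definition d_t (om : seqspace) (n : nat) : \bar R := kl (nuv m) xi (prefix om n).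
Definition h_t (om : seqspace) (n : nat) : \bar R := hell (nuv m) xi (prefix om n).
Definition c_t (om : seqspace) (n : nat) : \bar R :=
  sumE (fun i => ((post i (prefix om n))%:E * kl (nuv i) xi (prefix om n))%E).

Definition plausible (om : seqspace) (n : nat) (i : I) : Prop :=
  forall k, (k <= n)%N ->
    delta * w m / w i <= nuv i (prefix om k) / xi (prefix om k).

Definition dhat (om : seqspace) (n : nat) : \bar R :=
  (c_t om n * ((w m * delta)^-1)%:E)%E.

Definition hhat (om : seqspace) (n : nat) : \bar R :=
  ereal_sup [set ((w i / w m)%:E * hell (nuv i) xi (prefix om n))%E
            | i in plausible om n].
End Model.
End Defs.

(** The event that the ratio [mu_{<t} / xi_{<t}] ever drops below [delta] has
    [mu]-probability at most [delta] (Ville's inequality): the event that it first drops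
    at time [k] is a disjoint union of cylinders of length [k], on each of which
    [mu <= delta xi], so summing over [k] bounds its measure by [delta xi(...) <= delta].
    Off this event the posterior weight [w_mu mu_{<t} / xi_{<t}] stays at least
    [w_mu delta]; as every KL divergence is nonnegative (Gibbs' inequality), [c_t] then
    dominates [w_mu delta d_t], and [mu] belongs to every plausible class [M_t], so [h_t]
    is one of the terms of the supremum [hat h_t]. *)
From HB Require Import structures.
From mathcomp Require Import all_boot all_order all_algebra.
From mathcomp Require Import all_classical all_reals all_analysis.
From mathcomp Require Import lra.
Set Implicit Arguments.
Unset Strict Implicit.
Unset Printing Implicit Defensive.
Import Order.TTheory GRing.Theory Num.Theory.
Local Open Scope classical_set_scope.
Local Open Scope ring_scope.

Lemma measure_bigcup_countable d (R : realType) (T : measurableType d)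
    (J : choiceType) (mu : {measure set T -> \bar R}) (E : set J) (F : J -> set T) :
  countable E -> (forall j, E j -> measurable (F j)) -> trivIset E F ->
  mu (\bigcup_(j in E) F j) = \esum_(j in E) mu (F j).
Proof.
move=> /countable_injP[enc encinj] mF tF.
pose G n := \bigcup_(j in E `&` [set j | enc j = n]) F j.
have GE j : E j -> G (enc j) = F j.
  move=> Ej; apply/seteqP; split => [t [k [Ek ekj]]|t Fjt]; last by exists j.
  by rewrite -(encinj k j) ?inE.
have -> : \bigcup_(j in E) F j = \bigcup_(n in enc @` E) G n.
  apply/seteqP; split => [t [j Ej Fjt]|t [_ [j Ej <-]]].
    by exists (enc j); [exists j|rewrite GE].
  by rewrite GE // => Fjt; exists j.
rewrite measure_bigcup; last 2 first.
- by move=> _ [j Ej <-]; rewrite GE //; exact: mF.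
- by move=> _ _ [j Ej <-] [k Ek <-]; rewrite !GE // => /(tF _ _ Ej Ek) ->.
rewrite nneseries_esum // set_mem_set esum_image //.
by apply: eq_esum => j Ej; rewrite GE.
Qed.

Lemma sumE_ge (R : realType) (J : choiceType) (f : J -> \bar R) (j : J) :
  (forall i, 0 <= f i)%E -> (f j <= sumE f)%E.
Proof.
move=> f0; rewrite /sumE (esum1 (a := f^\-%E)) => [|i _]; last first.
  by rewrite funenegE; apply/max_r; rewrite leeNl oppe0.
rewrite sube0 (eq_esum (b := f)) => [|i _]; last by rewrite funeposE; apply/max_l.
apply: esum_ge; exists [set j]; last by rewrite fsbig_set1.
by split; [exact: finite_set1|move=> ?].
Qed.

Section Gibbs.
Variable R : realType.

Lemma klterm_ge_sub (p q : R) : 0 <= p -> 0 <= q -> ((p - q)%:E <= klterm p q)%E.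
Proof.
move=> p0 q0; rewrite /klterm.
have [->|pn0] := eqVneq p 0; first by rewrite sub0r lee_fin oppr_le0.
have [_|qn0] := eqVneq q 0; first exact: leey.
have pp : 0 < p by rewrite lt0r pn0.
have qp : 0 < q by rewrite lt0r qn0.
have qpp : 0 < q / p by rewrite divr_gt0.
have ln_le : ln (q / p) <= q / p - 1.
  by have := @le_ln1Dx R (q / p - 1); rewrite [1 + _]addrC subrK; apply; lra.
have pqp : p * (q / p) = q by rewrite mulrCA divff ?mulr1.
rewrite lee_fin -invf_div lnV ?posrE //; nra.
Qed.

(* The negative parts of [klterm (p j) (q j)] are bounded by [q j], hence summable,
   and the difference of the two sums is bounded below by [sum p - sum q]. *)
Lemma sumE_klterm_ge0 (J : choiceType) (p q : J -> R) :
  (forall j, 0 <= p j) -> (forall j, 0 <= q j) ->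
  \esum_(j in [set: J]) (p j)%:E = 1%E ->
  (\esum_(j in [set: J]) (q j)%:E <= 1)%E ->
  (0 <= sumE (fun j => klterm (p j) (q j)))%E.
Proof.
move=> p0 q0 sum_p sum_q; set f := fun j => klterm (p j) (q j).
have neg_le j : (f^\- j <= (q j)%:E)%E.
  rewrite funenegE ge_max lee_fin q0 andbT leeNl -EFinN.
  apply: (@le_trans _ _ (p j - q j)%:E); last exact: klterm_ge_sub.
  by rewrite lee_fin; have := p0 j; lra.
have negDp_le j : (f^\- j + (p j)%:E <= f^\+ j + (q j)%:E)%E.
  rewrite funenegE funeposE; have := klterm_ge_sub (p0 j) (q0 j); rewrite /f.
  case: (klterm (p j) (q j)) => [r||] // r_ge; last by rewrite leey.
  rewrite -EFinN -!EFin_max -!EFinD lee_fin; rewrite lee_fin in r_ge.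
  by case: (lerP 0 r) => r0; [rewrite max_r ?max_l|rewrite max_l ?max_r]; lra.
have N_le1 : (\esum_(j in [set: J]) f^\- j <= 1)%E.
  by apply: le_trans sum_q; apply: le_esum => j _.
have N_fin : (\esum_(j in [set: J]) f^\- j)%E \is a fin_num.
  rewrite ge0_fin_numE ?(le_lt_trans N_le1) ?ltry //.
  by apply: esum_ge0 => j _; exact: funeneg_ge0.
have := le_esum (fun j (_ : [set: J] j) => negDp_le j).
rewrite !esumD // => [|j _|j _]; rewrite ?lee_fin //.
rewrite sum_p => NDp_le; rewrite /sumE sube_ge0 ?N_fin //.
rewrite -(@leeD2rE _ 1%E) //; apply: le_trans NDp_le _.
by rewrite leeD2l.
Qed.

End Gibbs.

Section Cylinders.
Variable A : pointedType.
Local Notation T := (seqspace A).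

Lemma size_prefix (om : nat -> A) n : size (prefix om n) = n.
Proof. exact: size_mkseq. Qed.

Lemma prefixS (om : nat -> A) n : prefix om n.+1 = rcons (prefix om n) (om n).
Proof. exact: mkseqS. Qed.

Lemma prefix_take (om : nat -> A) k n :
  (k <= n)%N -> prefix om k = take k (prefix om n).
Proof. by move=> kn; rewrite /prefix /mkseq -map_take take_iota (minn_idPl kn). Qed.

Lemma cyl_prefix (om : nat -> A) n : cyl (prefix om n) om.
Proof. by rewrite /cyl /= size_prefix. Qed.

Lemma measurable_cyl (x : seq A) : measurable (cyl x : set T).
Proof. by apply: sub_sigma_algebra; exists x. Qed.

Lemma trivIset_cyl (E : set (seq A)) k :
  (forall x, E x -> size x = k) -> trivIset E (@cyl A).
Proof.
move=> Ek x y Ex Ey [om [cx cy]].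
by rewrite -cx -cy /cyl /= (Ek x Ex) (Ek y Ey).
Qed.

Lemma cyl_bigcup_rcons (x : seq A) : cyl x = \bigcup_a cyl (rcons x a).
Proof.
apply/seteqP; split => om.
- by move=> cx; exists (om (size x)) => //; rewrite /cyl /= size_rcons prefixS cx.
- by move=> [a _]; rewrite /cyl /= size_rcons prefixS => /rcons_inj[].
Qed.

Hypothesis countable_A : countable [set: A].

Lemma countable_seq : countable [set: seq A].
Proof.
have /countable_injP[f finj] := countable_A.
apply/countable_injP; exists (fun s => pickle (map f s)) => s1 s2 _ _ /(pcan_inj pickleK).
by apply: inj_map => a b; apply: finj; rewrite inE.
Qed.

Lemma measurable_bigcup_cyl (E : set (seq A)) :
  measurable (\bigcup_(x in E) cyl x : set T).
Proof.
rewrite bigcup_mkcond; apply: countable_bigcupT_measurable => [|x].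
  exact: countable_seq.
by case: ifP => // _; exact: measurable_cyl.
Qed.

Lemma measurable_prefix_determined (P : nat -> T -> Prop) :
  (forall n (om om' : T), prefix om n = prefix om' n -> P n om -> P n om') ->
  measurable [set om : T | forall n, P n om].
Proof.
move=> HP.
have -> : [set om : T | forall n, P n om] = \bigcap_n [set om | P n om].
  by apply/seteqP; split => om /= H n => [_|]; [exact: H|exact: H n I].
apply: bigcapT_measurable => n.
have -> : [set om : T | P n om] =
    \bigcup_(x in [set prefix om n | om in [set om | P n om]]) cyl x.
  apply/seteqP; split => [om Pom|om [_ [om' Pom' <-]]].
    by exists (prefix om n); [exists om|exact: cyl_prefix].
  by rewrite /cyl /= size_prefix => e; apply: HP Pom'.
exact: measurable_bigcup_cyl.
Qed.

Variable R : realType.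
Implicit Type mu : {measure set T -> \bar R}.

Lemma measure_bigcup_cyl mu (E : set (seq A)) k :
  (forall x, E x -> size x = k) ->
  mu (\bigcup_(x in E) cyl x) = \esum_(x in E) mu (cyl x).
Proof.
move=> Ek; rewrite measure_bigcup_countable // => [|x _|].
- exact: sub_countable (subset_card_le (subsetT E)) countable_seq.
- exact: measurable_cyl.
- exact: trivIset_cyl Ek.
Qed.

Lemma esum_cyl_rcons mu (x : seq A) :
  \esum_(a in [set: A]) mu (cyl (rcons x a)) = mu (cyl x).
Proof.
rewrite [in RHS]cyl_bigcup_rcons measure_bigcup_countable // => [a _|].
  exact: measurable_cyl.
move=> a b _ _ [om [ca cb]]; apply: (@rcons_injr _ x).
by rewrite -ca -cb /cyl /= !size_rcons.
Qed.

Lemma cylvE mu (x : seq A) : (mu setT < +oo)%E -> (cylv mu x)%:E = mu (cyl x).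
Proof.
move=> fin; rewrite /cylv fineK // ge0_fin_numE // (le_lt_trans _ fin) //.
by apply: le_measure; rewrite ?inE //; exact: measurable_cyl.
Qed.

Lemma cylv_ge0 mu (x : seq A) : 0 <= cylv mu x.
Proof. exact/fine_ge0. Qed.

Lemma esum_cond_cylv mu (x : seq A) : (mu setT < +oo)%E -> 0 < cylv mu x ->
  \esum_(a in [set: A]) (cond (cylv mu) x a)%:E = 1%E.
Proof.
move=> fin x_gt0; have c_ge0 : 0 <= (cylv mu x)^-1 by rewrite invr_ge0 ltW.
pose c : {nonneg R} := NngNum c_ge0.
have scaled : \esum_(a in [set: A]) ((cylv mu x)^-1%:E * mu (cyl (rcons x a)))%E
    = ((cylv mu x)^-1%:E * mu (cyl x))%E := esum_cyl_rcons (mscale c mu) x.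
rewrite -cylvE // -EFinM mulVf ?gt_eqF // in scaled; rewrite -scaled.
by apply: eq_esum => a _; rewrite -cylvE // -EFinM mulrC.
Qed.

Lemma kl_cylv_ge0 mu mu' (x : seq A) :
  (mu setT < +oo)%E -> (mu' setT < +oo)%E -> (0 < cylv mu x -> 0 < cylv mu' x) ->
  (0 <= kl (cylv mu) (cylv mu') x)%E.
Proof.
move=> fin fin' abs; have [x0|x_neq0] := eqVneq (cylv mu x) 0.
  have kl0 a : klterm (cond (cylv mu) x a) (cond (cylv mu') x a) = 0%E.
    by rewrite /klterm /cond x0 invr0 mulr0 eqxx.
  by rewrite /kl /sumE !esum1 ?subee // => a _; rewrite ?funenegE ?funeposE kl0 ?oppe0 maxxx.
have x_gt0 : 0 < cylv mu x by rewrite lt0r x_neq0 cylv_ge0.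
apply: sumE_klterm_ge0 => [a|a||]; rewrite ?esum_cond_cylv ?abs //.
- by rewrite divr_ge0 ?cylv_ge0.
- by rewrite divr_ge0 ?cylv_ge0.
Qed.

End Cylinders.

Section Ville.
Variables (R : realType) (A : pointedType).
Local Notation T := (seqspace A).
Hypothesis countable_A : countable [set: A].
Variables (mu : probability T R) (xi : {measure set T -> \bar R}).
Hypotheses (xi_le1 : (xi setT <= 1)%E)
  (xi_dominates : forall x, cylv xi x = 0 -> cylv mu x = 0).
Variables (delta : R) (delta_gt0 : 0 < delta).

Let mu_fin : (mu setT < +oo)%E. Proof. by rewrite probability_setT ltry. Qed.
Let xi_fin : (xi setT < +oo)%E. Proof. by rewrite (le_lt_trans xi_le1) ?ltry. Qed.

Let ratio (x : seq A) := cylv mu x / cylv xi x.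
Let first_drop k : set T := [set om | ratio (prefix om k) < delta /\
  forall j, (j < k)%N -> delta <= ratio (prefix om j)].
Let drops k : set (seq A) := [set x | size x = k /\ ratio x < delta /\
  forall j, (j < k)%N -> delta <= ratio (take j x)].
Let delta_xi : {measure set T -> \bar R} := mscale (NngNum (ltW delta_gt0)) xi.

Let first_dropE k : first_drop k = \bigcup_(x in drops k) cyl x.
Proof.
apply/seteqP; split => [om [lt_k ge_j]|om [x [sx [lt_k ge_j]] cx]].
- exists (prefix om k); last exact: cyl_prefix.
  split; [exact: size_prefix|split => // j jk].
  by rewrite -prefix_take; [exact: ge_j|exact: ltnW].
- have px : prefix om k = x by rewrite -cx sx.
  by split => [|j jk]; rewrite ?px // (prefix_take om (ltnW jk)) px; exact: ge_j.
Qed.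

Let measurable_first_drop k : measurable (first_drop k).
Proof. by rewrite first_dropE; exact: measurable_bigcup_cyl. Qed.

Let trivIset_first_drop : trivIset setT first_drop.
Proof.
move=> i j _ _ [om [[lt_i ge_i] [lt_j ge_j]]].
by case: (ltngtP i j) => // ij; [move: (ge_j i ij)|move: (ge_i j ij)];
  rewrite leNgt ?lt_i ?lt_j.
Qed.

Let not_good :
  ~` [set om | forall k, delta <= ratio (prefix om k)] = \bigcup_k first_drop k.
Proof.
apply/seteqP; split => om /=.
- move=> /existsNP[k /negP]; rewrite -ltNge => lt_k.
  have drop : exists k, ratio (prefix om k) < delta by exists k.
  have [k0 lt_k0 min_k0] := ex_minnP drop.
  exists k0 => //; split => // j jk; rewrite leNgt; apply/negP => lt_j.
  by move: (min_k0 j lt_j); rewrite leqNgt jk.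
- by move=> [k _ [lt_k _]] /(_ k); rewrite leNgt lt_k.
Qed.

Let mu_first_drop_le k : (mu (first_drop k) <= delta_xi (first_drop k))%E.
Proof.
have sizeE x : drops k x -> size x = k by case.
rewrite first_dropE !(measure_bigcup_cyl countable_A _ sizeE).
apply: le_esum => x [_ [lt_x _]].
have -> : delta_xi (cyl x) = (delta%:E * xi (cyl x))%E by [].
rewrite -!cylvE ?xi_fin ?mu_fin // -EFinM lee_fin.
have [xi0|xi_neq0] := eqVneq (cylv xi x) 0.
  by rewrite xi0 (xi_dominates xi0) mulr0.
have xi_gt0 : 0 < cylv xi x by rewrite lt0r xi_neq0 cylv_ge0.
by move: lt_x; rewrite /ratio ltr_pdivrMr // mulrC => /ltW.
Qed.

Lemma ville : ((1 - delta)%:E <=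
  mu [set om | forall k, (delta <= cylv mu (prefix om k) / cylv xi (prefix om k))%R])%E.
Proof.
set good := [set om | _].
have mgood : measurable (good : set T).
  by apply: measurable_prefix_determined => // n om om' ->.
have bad_le : (mu (~` good) <= delta%:E)%E.
  rewrite not_good measure_bigcup //.
  apply: le_trans (lee_nneseries (fun k _ _ => measure_ge0 mu _)
    (fun k _ => mu_first_drop_le k)) _.
  rewrite -measure_bigcup // -not_good.
  apply: (@le_trans _ _ (delta_xi setT)).
    by apply: le_measure; rewrite ?inE //; exact: measurableC.
  have -> : delta_xi setT = (delta%:E * xi setT)%E by [].
  by rewrite -[leRHS]mule1; apply: lee_wpmul2l => //; rewrite lee_fin ltW.
have good_fin : mu good \is a fin_num.
  by rewrite ge0_fin_numE // (le_lt_trans (probability_le1 mu mgood)) ?ltry.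
by move: bad_le; rewrite probability_setC // EFinB !leeBlDr // addeC.
Qed.

End Ville.

Section Mixture.
Variables (R : realType) (A : pointedType).
Local Notation T := (seqspace A).
Variables (I : countType) (nu : I -> probability T R) (w : I -> R).
Hypotheses (w_gt0 : forall i, 0 < w i)
  (w_sum : esum [set: I] (fun i => (w i)%:E) = 1%E).

Definition mixture_term (n : nat) : {measure set T -> \bar R} :=
  if pickle_inv n is Some i then mscale (NngNum (ltW (w_gt0 i))) (nu i) else mzero.

Definition mixture_measure : {measure set T -> \bar R} := mseries mixture_term 0.

Local Notation Xi := mixture_measure.

Lemma mixtureE S : mixture w nu S = Xi S.
Proof.
transitivity (\esum_(n in pickle @` [set: I]) mixture_term n S).
  rewrite /mixture esum_image; last by move=> ? ? _ _; exact: (pcan_inj pickleK).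
  by apply: eq_esum => i _; rewrite /mixture_term pickleK_inv.
transitivity (\sum_(0 <= n <oo) mixture_term n S)%E; last by [].
rewrite nneseries_esumT // [LHS]esum_mkcond; apply: eq_esum => n _.
case: ifPn => // /negP; rewrite in_setE /mixture_term.
case E : (pickle_inv n) => [i|] // nP.
by exfalso; apply: nP; exists i => //; have := @pickle_invK I n; rewrite E.
Qed.

Lemma xi_cylv : xi nu w = cylv Xi.
Proof. by apply/funext => x; rewrite /xi /cylv mixtureE. Qed.

Lemma mixture_setT : Xi setT = 1%E.
Proof.
by rewrite -mixtureE /mixture -w_sum; apply: eq_esum => i _; rewrite probability_setT mule1.
Qed.

Lemma scale_le_mixture i S : ((w i)%:E * nu i S <= Xi S)%E.
Proof.
rewrite -mixtureE; apply: esum_ge; exists [set i]; last by rewrite fsbig_set1.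
by split; [exact: finite_set1|move=> ?].
Qed.

Let nu_fin i : (nu i setT < +oo)%E. Proof. by rewrite probability_setT ltry. Qed.
Let Xi_fin : (Xi setT < +oo)%E. Proof. by rewrite mixture_setT ltry. Qed.

Lemma w_nuv_le_xi i x : w i * nuv nu i x <= xi nu w x.
Proof. by rewrite -lee_fin xi_cylv EFinM /nuv !cylvE ?nu_fin //; exact: scale_le_mixture. Qed.

Lemma xi_gt0 i x : 0 < nuv nu i x -> 0 < xi nu w x.
Proof. by move=> nu_gt0; apply: lt_le_trans (w_nuv_le_xi i x); rewrite mulr_gt0. Qed.

Lemma post_ge0 i x : 0 <= post nu w i x.
Proof. by rewrite /post xi_cylv divr_ge0 ?mulr_ge0 ?cylv_ge0 ?ltW. Qed.

Hypothesis countable_A : countable [set: A].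

Lemma kl_ge0 i x : (0 <= kl (nuv nu i) (xi nu w) x)%E.
Proof.
rewrite xi_cylv; apply: (@kl_cylv_ge0 _ countable_A _ (nu i) Xi _ (nu_fin i) Xi_fin).
by rewrite -xi_cylv; exact: xi_gt0.
Qed.

Lemma post_kl_le_c_t om n i :
  ((post nu w i (prefix om n))%:E * kl (nuv nu i) (xi nu w) (prefix om n)
    <= c_t nu w om n)%E.
Proof. by apply: sumE_ge => j; rewrite mule_ge0 ?lee_fin ?post_ge0 ?kl_ge0. Qed.

Variables (m : I) (delta : R).
Hypothesis delta_gt0 : 0 < delta.

Definition ratio_stays_above : set T :=
  [set om | forall k, delta <= nuv nu m (prefix om k) / xi nu w (prefix om k)].

Lemma ratio_stays_above_ge : ((1 - delta)%:E <= nu m ratio_stays_above)%E.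
Proof.
rewrite /ratio_stays_above xi_cylv.
apply: (@ville _ _ countable_A (nu m) Xi) => // [|x xi0]; first by rewrite mixture_setT.
apply/eqP; rewrite eq_le cylv_ge0 andbT leNgt; apply/negP => nu_gt0.
by move: (xi_gt0 nu_gt0); rewrite xi_cylv xi0 ltxx.
Qed.

Lemma d_t_le_dhat om : ratio_stays_above om ->
  forall n, (d_t nu w m om n <= dhat nu w m delta om n)%E.
Proof.
move=> above n; rewrite /d_t /dhat; set x := prefix om n.
have wd_gt0 : 0 < w m * delta by rewrite mulr_gt0.
have wd_le_post : w m * delta <= post nu w m x.
  by rewrite /post -mulrA ler_pM2l //; exact: (above n).
rewrite -[leLHS]mul1e -(mulfV (lt0r_neq0 wd_gt0)) EFinM muleAC.
apply: lee_wpmul2r; first by rewrite lee_fin invr_ge0 ltW.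
apply: le_trans (post_kl_le_c_t om n m).
by apply: lee_wpmul2r; rewrite ?kl_ge0 ?lee_fin.
Qed.

Lemma h_t_le_hhat om : ratio_stays_above om ->
  forall n, (h_t nu w m om n <= hhat nu w m delta om n)%E.
Proof.
move=> above n; apply: ereal_sup_ubound; exists m.
  by move=> k _; rewrite mulfK ?gt_eqF //; exact: above.
by rewrite divff ?gt_eqF // mul1e.
Qed.

End Mixture.

Lemma plausible_prefix (R : realType) (A : pointedType) (I : countType)
    (nu : I -> probability (seqspace A) R) w m delta (om om' : seqspace A) n :
  prefix om n = prefix om' n -> plausible nu w m delta om n = plausible nu w m delta om' n.
Proof.
move=> e; have e_le k : (k <= n)%N -> prefix om k = prefix om' k.
  by move=> kn; rewrite (prefix_take om kn) (prefix_take om' kn) e.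
apply/funext => i; apply/propext.
by split => above k kn; [rewrite -e_le|rewrite e_le] => //; exact: above.
Qed.

Theorem theorem6 (R : realType) (A : pointedType) (hA : countable [set: A])
  (I : countType) (nu : I -> probability (seqspace A) R)
  (nu_inj : injective nu)
  (w : I -> R) (w_pos : forall i, 0 < w i) (w_le1 : forall i, w i <= 1)
  (w_sum : esum [set: I] (fun i => (w i)%:E) = 1%E)
  (m : I) (delta : R) (delta_pos : 0 < delta) (delta_le1 : delta <= 1) :
  ((1 - delta)%:E <=
     nu m [set om | forall n, (d_t nu w m om n <= dhat nu w m delta om n)%E])%E
  /\
  ((1 - delta)%:E <=
     nu m [set om | forall n, (h_t nu w m om n <= hhat nu w m delta om n)%E])%E.
Proof.
have above_ge := ratio_stays_above_ge nu w_pos w_sum hA m delta_pos.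
have measurable_above : measurable (ratio_stays_above nu w m delta).
  by apply: (measurable_prefix_determined hA) => n om om' ->.
split; apply: le_trans above_ge _; apply: le_measure; rewrite ?inE.
- exact: measurable_above.
- apply: (measurable_prefix_determined hA) => n om om' e.
  by rewrite /d_t /dhat /c_t e.
- by move=> om /(d_t_le_dhat w_pos w_sum hA delta_pos).
- exact: measurable_above.
- apply: (measurable_prefix_determined hA) => n om om' e.
  by rewrite /h_t /hhat (plausible_prefix _ _ _ _ e) e.
- by move=> om /(h_t_le_hhat w_pos).
Qed.
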